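(* Let $\delta\in\mathbb{F}_{5^8}^*$ with $\delta\neq\pm1$ and multiplicative order of $\delta$ dividing $4$. Then $S(x)=x^5+\delta x^{5^5}\in\mathbb{F}_{5^8}[x]$ is a scattered polynomial of index $0$ over $\mathbb{F}_{5^8}$ (with $q=5$).
   Context: An $\mathbb{F}_q$-linearized polynomial $S\in\mathbb{F}_{q^n}[x]$ is a scattered polynomial of index $t$ over $\mathbb{F}_{q^n}$ if for all $y,z\in\mathbb{F}_{q^n}^*$, $\frac{S(y)}{y^{q^t}}=\frac{S(z)}{z^{q^t}}$ implies $y/z\in\mathbb{F}_q$. *)

From HB Require Import structures.
From mathcomp Require Import all_boot all_order all_algebra all_field.
Set Implicit Arguments. Unset Strict Implicit. Unset Printing Implicit Defensive.
Import GRing.Theory.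
Local Open Scope ring_scope.

Definition in_Fq (F : finFieldType) (q : nat) (x : F) : bool := x ^+ q == x.

Definition linearized (F : finFieldType) (q : nat) (S : {poly F}) : Prop :=
  forall i : nat, S`_i != 0 -> exists k : nat, i = (q ^ k)%N.

Definition scattered (F : finFieldType) (q t : nat) (S : {poly F}) : Prop :=
  linearized q S /\
  forall y z : F, y != 0 -> z != 0 ->
    S.[y] / y ^+ (q ^ t) = S.[z] / z ^+ (q ^ t) -> in_Fq q (y / z).

(* Write frob x = x ^+ 5^4 for the involution of F = F_{5^8} over F_{5^4}.
   Since delta^5 = delta, S(w) = (w + delta frob w)^5 = twist(w)^5.  If
   S(y)/y = S(z)/z, then m = twist y / twist z satisfies m^5 = y/z and
   twist(m^5 z) = m twist z.  Together with its image under frob, and using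
   delta^2 = -1, this equation eliminates z and leaves a relation on m alone;
   with p = m + frob m and c = (m - frob m)^2, both in F_{5^4}, it reads
   (p - p^5)^2 = c + c^5.  If m <> frob m then c is a non-square of F_{5^4}
   (c^312 = -1), and an exhaustive search in F_{5^4} = F_5[r]/(r^4 - 2) shows
   that no such p and c exist.  Hence m = frob m, the relation gives
   p^5 = p for p = 2m, and y/z = m^5 = m lies in F_5. *)

From HB Require Import structures.
From mathcomp Require Import all_boot all_order all_algebra all_field.
From mathcomp Require Import all_fingroup all_solvable.
From mathcomp Require Import ring.
Import GRing.Theory.

Set Implicit Arguments.
Unset Strict Implicit.
Unset Printing Implicit Defensive.

(* The digits (a, b, c, d) in [0, 5) stand for a + b r + c r^2 + d r^3 in
   F_5[r]/(r^4 - 2), a model of F_625. *)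
Notation quad := (nat * nat * nat * nat)%type.

Definition quad_norm (a b c d : nat) : quad := (a %% 5, b %% 5, c %% 5, d %% 5).

Definition quad0 : quad := (0, 0, 0, 0).
Definition quad1 : quad := (1, 0, 0, 0).
Definition quadN1 : quad := (4, 0, 0, 0).

Definition quad_add (x y : quad) : quad :=
  let: (a0, a1, a2, a3) := x in let: (b0, b1, b2, b3) := y in
  quad_norm (a0 + b0) (a1 + b1) (a2 + b2) (a3 + b3).

Definition quad_sub (x y : quad) : quad :=
  let: (a0, a1, a2, a3) := x in let: (b0, b1, b2, b3) := y in
  quad_norm (a0 + b0 * 4) (a1 + b1 * 4) (a2 + b2 * 4) (a3 + b3 * 4).

Definition quad_mul (x y : quad) : quad :=
  let: (a0, a1, a2, a3) := x in let: (b0, b1, b2, b3) := y in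
  quad_norm (a0 * b0 + (a1 * b3 + a2 * b2 + a3 * b1) * 2)
            (a0 * b1 + a1 * b0 + (a2 * b3 + a3 * b2) * 2)
            (a0 * b2 + a1 * b1 + a2 * b0 + a3 * b3 * 2)
            (a0 * b3 + a1 * b2 + a2 * b1 + a3 * b0).

Definition quad_exp (x : quad) (n : nat) : quad := iter n (quad_mul x) quad1.

Definition quad_enum : seq quad :=
  [seq (x, d) | x <- [seq (x, c) | x <- [seq (a, b) | a <- iota 0 5, b <- iota 0 5],
                                    c <- iota 0 5], d <- iota 0 5].

Lemma quad_enum_uniq : uniq quad_enum.
Proof.
by rewrite !allpairs_uniq ?iota_uniq // => -[? ?] [? ?] _ _ [-> ->].
Qed.

Lemma size_quad_enum : size quad_enum = 625.
Proof. by rewrite !size_allpairs size_iota. Qed.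

Lemma quad_norm_enum a b c d : quad_norm a b c d \in quad_enum.
Proof.
have digit n : n %% 5 \in iota 0 5 by rewrite mem_iota ltn_mod.
apply: (allpairs_f pair); last exact: digit.
apply: (allpairs_f pair); last exact: digit.
exact: (allpairs_f pair).
Qed.

Lemma quad_sub_eq0_check :
  all (fun x => all (fun y => (quad_sub x y == quad0) ==> (x == y)) quad_enum) quad_enum.
Proof. by vm_compute. Qed.

Lemma quad_exp624_check :
  all (fun x => (x == quad0) || (quad_exp x 624 == quad1)) quad_enum.
Proof. by vm_compute. Qed.

Lemma quad_no_solution_check :
  let sqrs := [seq let w := quad_sub p (quad_exp p 5) in quad_mul w w | p <- quad_enum] in
  all (fun c => (quad_exp c 312 != quadN1) || (quad_add c (quad_exp c 5) \notin sqrs))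
    quad_enum.
Proof. by vm_compute. Qed.

Local Open Scope ring_scope.

Lemma exprN_odd (R : pzRingType) (x : R) n : odd n -> (- x) ^+ n = - x ^+ n.
Proof. by move=> n_odd; rewrite exprNn -signr_odd n_odd expr1 mulN1r. Qed.

Lemma expr4_sqrN1 (R : pzRingType) (x : R) : x ^+ 2 = -1 -> x ^+ 4 = 1.
Proof. by move=> x2; rewrite (exprM x 2 2) x2 sqrrN expr1n. Qed.

Section Char5.

Variable F : fieldType.
Hypothesis char5 : 5%N \in [pchar F].

Lemma natr4_char5 : 4%:R = -1 :> F.
Proof. by apply/eqP; rewrite -subr_eq0 opprK -(natrD F 4 1) (pcharf0 char5). Qed.

Lemma natr2_char5_neq0 : 2%:R != 0 :> F.
Proof.
apply: contra_eqN (pcharf0 char5) => /eqP two0.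
by rewrite (natrD F 4 1) (natrM F 2 2) two0 mul0r add0r oner_neq0.
Qed.

Lemma exprD_char5 n (x y : F) : (x + y) ^+ (5 ^ n) = x ^+ (5 ^ n) + y ^+ (5 ^ n).
Proof. by apply: exprDn_pchar; rewrite pnatX (pnatE _ (isT : prime 5)) char5. Qed.

Lemma sqr_artin_schreier_of_relation (a b : F) :
    (a ^+ 5 - a) * (b ^+ 5 - b) = (a - b ^+ 5) * (a ^+ 5 - b) ->
  (a + b - (a + b) ^+ 5) ^+ 2 = (a - b) ^+ 2 + ((a - b) ^+ 2) ^+ 5.
Proof.
move=> rel; rewrite exprAC !(exprD_char5 1) exprN_odd //.
apply/eqP; rewrite -subr_eq0; apply/eqP.
transitivity (2%:R * ((a ^+ 5 - a) * (b ^+ 5 - b) - (a - b ^+ 5) * (a ^+ 5 - b))).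
  by ring.
by rewrite rel subrr mulr0.
Qed.

End Char5.

Section QuadModel.

Variables (F : fieldType) (r : F).
Hypotheses (char5 : 5%N \in [pchar F]) (r4 : r ^+ 4 = 2%:R).

Definition quad_val (x : quad) : F :=
  let: (a, b, c, d) := x in a%:R + b%:R * r + c%:R * r ^+ 2 + d%:R * r ^+ 3.

Lemma natr_mod5 n : (n %% 5)%:R = n%:R :> F.
Proof. by rewrite {2}(divn_eq n 5) natrD natrM (pcharf0 char5) mulr0 add0r. Qed.

Lemma quad_val_norm a b c d :
  quad_val (quad_norm a b c d) = a%:R + b%:R * r + c%:R * r ^+ 2 + d%:R * r ^+ 3.
Proof. by rewrite /= !natr_mod5. Qed.

Lemma quad_val0 : quad_val quad0 = 0.
Proof. by rewrite /=; ring. Qed.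

Lemma quad_val1 : quad_val quad1 = 1.
Proof. by rewrite /=; ring. Qed.

Lemma quad_valN1 : quad_val quadN1 = -1.
Proof. by rewrite /= (natr4_char5 char5); ring. Qed.

Lemma quad_valD x y : quad_val (quad_add x y) = quad_val x + quad_val y.
Proof.
case: x => [[[a0 a1] a2] a3]; case: y => [[[b0 b1] b2] b3].
by rewrite quad_val_norm !natrD /=; ring.
Qed.

Lemma quad_valB x y : quad_val (quad_sub x y) = quad_val x - quad_val y.
Proof.
case: x => [[[a0 a1] a2] a3]; case: y => [[[b0 b1] b2] b3].
by rewrite quad_val_norm !natrD !natrM (natr4_char5 char5) /=; ring.
Qed.

Lemma quad_valM x y : quad_val (quad_mul x y) = quad_val x * quad_val y.
Proof.
case: x => [[[a0 a1] a2] a3]; case: y => [[[b0 b1] b2] b3].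
by rewrite quad_val_norm !natrD !natrM -r4 /=; ring.
Qed.

Lemma quad_valX x n : quad_val (quad_exp x n) = quad_val x ^+ n.
Proof.
elim: n => [|n IHn]; first by rewrite quad_val1.
by rewrite [quad_exp x _]iterS quad_valM IHn exprS.
Qed.

Lemma quad_sub_enum x y : quad_sub x y \in quad_enum.
Proof. by case: x y => [[[? ?] ?] ?] [[[? ?] ?] ?]; apply: quad_norm_enum. Qed.

Lemma quad_add_enum x y : quad_add x y \in quad_enum.
Proof. by case: x y => [[[? ?] ?] ?] [[[? ?] ?] ?]; apply: quad_norm_enum. Qed.

Lemma quad_mul_enum x y : quad_mul x y \in quad_enum.
Proof. by case: x y => [[[? ?] ?] ?] [[[? ?] ?] ?]; apply: quad_norm_enum. Qed.

Lemma quad_exp_enum x n : quad_exp x n.+1 \in quad_enum.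
Proof. exact: quad_mul_enum. Qed.

Lemma quad_val_exp624 : {in quad_enum, forall x, x != quad0 -> quad_val x ^+ 624 = 1}.
Proof.
move=> x xE x0; have /orP[/eqP x0'|/eqP x624] := allP quad_exp624_check x xE.
  by rewrite x0' eqxx in x0.
by rewrite -quad_valX x624 quad_val1.
Qed.

Lemma quad_val_frob : {in quad_enum, forall x, quad_val x ^+ 625 = quad_val x}.
Proof.
move=> x xE; have [->|x0] := eqVneq x quad0; first by rewrite quad_val0 expr0n.
by rewrite exprS quad_val_exp624 ?mulr1.
Qed.

Lemma quad_val_inj : {in quad_enum &, injective quad_val}.
Proof.
move=> x y xE yE exy; have [xy0|xy0] := eqVneq (quad_sub x y) quad0.
  exact/eqP/(implyP (allP (allP quad_sub_eq0_check x xE) y yE))/eqP.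
have := quad_val_exp624 (quad_sub_enum x y) xy0.
by rewrite quad_valB exy subrr expr0n => /eqP; rewrite eq_sym oner_eq0.
Qed.

Lemma quad_val_onto u : u ^+ 625 = u -> exists2 x, x \in quad_enum & u = quad_val x.
Proof.
move=> uF; apply/mapP/negPn/negP => u_new.
have roots_uniq : uniq (u :: map quad_val quad_enum).
  by rewrite cons_uniq u_new (map_inj_in_uniq quad_val_inj) quad_enum_uniq.
have size_p : size ('X^625 - 'X : {poly F}) = 626.
  by rewrite size_polyDl ?size_polyXn ?size_polyN ?size_polyX.
have p_neq0 : ('X^625 - 'X : {poly F}) != 0 by rewrite -size_poly_eq0 size_p.
have all_roots : all (root ('X^625 - 'X)) (u :: map quad_val quad_enum).
  apply/allP => v; rewrite inE => /predU1P[->|/mapP[x xE ->]].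
    by rewrite /root !hornerE uF subrr.
  by rewrite /root !hornerE quad_val_frob // subrr.
have := max_poly_roots p_neq0 all_roots roots_uniq.
by rewrite size_p (lock quad_enum) /= size_map -lock size_quad_enum.
Qed.

Lemma artin_schreier_sqr_neq (p c : F) :
  p ^+ 625 = p -> c ^+ 312 = -1 -> (p - p ^+ 5) ^+ 2 != c + c ^+ 5.
Proof.
move=> pF cN1; have cF : c ^+ 625 = c.
  by rewrite exprS (exprM c 312 2) cN1 sqrrN expr1n mulr1.
have [x xE ->] := quad_val_onto pF; have [y yE cE] := quad_val_onto cF.
rewrite cE -quad_valN1 -quad_valX in cN1 *.
have {}cN1 : quad_exp y 312 = quadN1 by apply: quad_val_inj cN1; rewrite ?quad_exp_enum.
apply/eqP => E.
have /orP[] := allP quad_no_solution_check y yE; first by rewrite cN1 eqxx.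
apply/negP; rewrite negbK; apply/mapP; exists x => //.
apply: quad_val_inj; rewrite ?quad_add_enum ?quad_mul_enum //.
by rewrite quad_valD quad_valM quad_valB !quad_valX -E expr2.
Qed.

End QuadModel.

Lemma finField_prim_root (F : finFieldType) n :
  (n %| #|F|.-1)%N -> exists z : F, n.-primitive_root z.
Proof.
move=> n_dvd; have /cyclicP[g defG] := field_unit_group_cyclic [set: {unit F}]%G.
have og : #[g]%g = #|F|.-1 by rewrite /order -defG card_finField_unit.
have og_gt0 : (0 < #|F|.-1)%N by rewrite -og order_gt0.
have g1 : FinRing.uval g ^+ #|F|.-1 = 1.
  by rewrite -og -FinRing.val_unitX expg_order FinRing.val_unit1.
have [m m_prim m_dvd] := prim_order_exists og_gt0 g1.
suff m_eq : m = #|F|.-1.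
  by exists (FinRing.uval g ^+ (m %/ n)); apply: dvdn_prim_root; rewrite // m_eq.
apply/eqP; rewrite eqn_dvd m_dvd -og order_dvdn; apply/eqP/val_inj.
by rewrite FinRing.val_unitX (prim_expr_order m_prim) FinRing.val_unit1.
Qed.

Lemma exists_fourth_root2 (F : finFieldType) :
  5%N \in [pchar F] -> (16 %| #|F|.-1)%N -> exists r : F, r ^+ 4 = 2%:R.
Proof.
move=> char5 /finField_prim_root[z z_prim].
have z8 : z ^+ 8 = -1.
  have : (z ^+ 8) ^+ 2 == 1 by rewrite -exprM (prim_expr_order z_prim).
  by rewrite sqrf_eq1 -(prim_order_dvd z_prim) orFb => /eqP.
have char5_0 := pcharf0 char5.
have : (z ^+ 4 - 2%:R) * (z ^+ 4 + 2%:R) = 0.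
  have -> : (z ^+ 4 - 2%:R) * (z ^+ 4 + 2%:R) = z ^+ 8 + 1 - 5%:R by ring.
  by rewrite z8 char5_0 addNr subr0.
move/eqP; rewrite mulf_eq0 subr_eq0 addr_eq0 => /orP[/eqP z4|/eqP z4].
  by exists z.
exists (z ^+ 3); rewrite exprAC z4.
have -> : (- 2%:R : F) ^+ 3 = 2%:R - 2%:R * 5%:R by ring.
by rewrite char5_0 mulr0 subr0.
Qed.

Lemma linearized_addXq (F : finFieldType) q k l (a : F) :
  linearized q ('X^(q ^ k) + a *: 'X^(q ^ l)).
Proof.
move=> i; rewrite coefD coefZ !coefXn.
have [->|_] := eqVneq i (q ^ k)%N; first by exists k.
have [->|_] := eqVneq i (q ^ l)%N; first by exists l.
by rewrite mulr0 addr0 eqxx.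
Qed.

Section TwistedFrobenius.

Variables (F : finFieldType) (delta : F).
Hypotheses (cardF : #|F| = (5 ^ 8)%N) (delta2 : delta ^+ 2 = -1).

Let char5 : 5%N \in [pchar F] := card_finPcharP cardF isT.

(* Locked, so that unification never unfolds x ^+ 625. *)
Fact frob_key : unit. Proof. by []. Qed.
Definition frob : F -> F := locked_with frob_key (fun x => x ^+ 625).
Canonical frob_unlockable := [unlockable fun frob].

Lemma frobE x : frob x = x ^+ 625.
Proof. by rewrite unlock. Qed.

Lemma frobD x y : frob (x + y) = frob x + frob y.
Proof. by rewrite !frobE; exact: (exprD_char5 char5 4). Qed.

Lemma frobN x : frob (- x) = - frob x.
Proof. by rewrite !frobE exprN_odd. Qed.

Lemma frobB x y : frob (x - y) = frob x - frob y.
Proof. by rewrite frobD frobN. Qed.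

Lemma frobM x y : frob (x * y) = frob x * frob y.
Proof. by rewrite !frobE exprMn. Qed.

Lemma frobX x n : frob (x ^+ n) = frob x ^+ n.
Proof. by rewrite !frobE exprAC. Qed.

Lemma frob_eq0 x : (frob x == 0) = (x == 0).
Proof. by rewrite frobE expf_eq0. Qed.

Lemma frobK : involutive frob.
Proof. by move=> x; rewrite !frobE -[625%N]/(5 ^ 4)%N -exprM -expnD -cardF expf_card. Qed.

Lemma frob_delta : frob delta = delta.
Proof. by rewrite frobE (exprD delta (4 * 156) 1) exprM (expr4_sqrN1 delta2) expr1n mul1r. Qed.

Definition twist (w : F) : F := w + delta * frob w.

Lemma horner_twist w : ('X^5 + delta *: 'X^(5 ^ 5)).[w] = twist w ^+ 5.
Proof.
rewrite hornerD hornerZ !hornerXn.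
have -> : w ^+ (5 ^ 5) = frob w ^+ 5 by rewrite frobE -exprM.
rewrite (exprD_char5 char5 1) [(delta * _) ^+ _]exprMn.
by rewrite (exprS delta 4) (expr4_sqrN1 delta2) mulr1.
Qed.

Lemma frob_twist w : frob (twist w) = frob w + delta * w.
Proof. by rewrite frobD frobM frob_delta frobK. Qed.

Lemma twist_neq0 z : z != 0 -> twist z != 0.
Proof.
move=> z0; apply: contraNneq z0 => twist0.
have fz : frob z = - (delta * z).
  by apply/eqP; rewrite -addr_eq0 -frob_twist twist0 frobE expr0n.
have : 2%:R * z = 0 by rewrite -twist0 /twist fz mulrN mulrA -expr2 delta2; ring.
by move/eqP; rewrite mulf_eq0 (negbTE (natr2_char5_neq0 char5)).
Qed.

Lemma twist_relation m z : z != 0 -> twist (m ^+ 5 * z) = m * twist z ->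
  (m ^+ 5 - m) * (frob m ^+ 5 - frob m) = (m - frob m ^+ 5) * (m ^+ 5 - frob m).
Proof.
rewrite /twist frobM frobX => z0 eq_twist.
have e1 : (m ^+ 5 - m) * z = delta * (m - frob m ^+ 5) * frob z.
  apply/eqP; rewrite -subr_eq0; apply/eqP.
  transitivity (m ^+ 5 * z + delta * (frob m ^+ 5 * frob z) - m * (z + delta * frob z)).
    by ring.
  by rewrite eq_twist subrr.
have e2 : (frob m ^+ 5 - frob m) * frob z = delta * (frob m - m ^+ 5) * z.
  by move: (congr1 frob e1); rewrite !frobM !frobB !frobX !frobK frob_delta.
have zz0 : z * frob z != 0 by rewrite mulf_neq0 ?frob_eq0.
apply: (mulIf zz0); transitivity (((m ^+ 5 - m) * z) * ((frob m ^+ 5 - frob m) * frob z)).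
  by ring.
rewrite e1 e2; transitivity (- delta ^+ 2 * (m - frob m ^+ 5) * (m ^+ 5 - frob m)
  * (z * frob z)); first by ring.
by rewrite delta2 opprK mul1r.
Qed.

Lemma frob_fixed_of_relation m :
    (m ^+ 5 - m) * (frob m ^+ 5 - frob m) = (m - frob m ^+ 5) * (m ^+ 5 - frob m) ->
  m ^+ 5 = m.
Proof.
move=> rel; have [r r4] : exists r : F, r ^+ 4 = 2%:R.
  by apply: exists_fourth_root2 char5 _; rewrite cardF.
have E := sqr_artin_schreier_of_relation char5 rel.
have [fm|fm] := eqVneq (frob m) m.
  move: E; rewrite fm subrr expr0n /= expr0n addr0 => /eqP; rewrite sqrf_eq0 subr_eq0.
  rewrite (exprD_char5 char5 1) -!mulr2n -mulr_natl -[m ^+ 5 *+ 2]mulr_natl => /eqP.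
  by move/(mulfI (natr2_char5_neq0 char5))/esym.
have d0 : m - frob m != 0 by rewrite subr_eq0 eq_sym.
have d624 : (m - frob m) ^+ 624 = -1.
  by apply: (mulfI d0); rewrite -exprS mulrN1 -frobE frobB frobK opprB.
have c312 : ((m - frob m) ^+ 2) ^+ 312 = -1 by rewrite -exprM.
have p625 : (m + frob m) ^+ 625 = m + frob m by rewrite -frobE frobD frobK addrC.
by move: (artin_schreier_sqr_neq char5 r4 p625 c312); rewrite E eqxx.
Qed.

Lemma twist_scattered y z : y != 0 -> z != 0 ->
  twist y ^+ 5 / y = twist z ^+ 5 / z -> (y / z) ^+ 5 = y / z.
Proof.
move=> y0 z0 eqS; have tz0 := twist_neq0 z0.
set m := twist y / twist z.
have m5 : m ^+ 5 = y / z.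
  rewrite expr_div_n; apply/eqP; rewrite eqr_div ?expf_neq0 //.
  by move/eqP: eqS; rewrite eqr_div // mulrC => /eqP ->; rewrite mulrC.
have rel : twist (m ^+ 5 * z) = m * twist z by rewrite m5 divfK // divfK.
by rewrite -m5 !(frob_fixed_of_relation (twist_relation z0 rel)).
Qed.

End TwistedFrobenius.

Theorem mainTheorem12 (F : finFieldType) (hF : #|F| = (5 ^ 8)%N) (delta : F) :
  delta != 0 -> delta != 1 -> delta != -1 -> delta ^+ 4 = 1 ->
  scattered 5 0 ('X^5 + delta *: 'X^(5 ^ 5)).
Proof.
move=> _ delta_neq1 delta_neqN1 delta4.
have delta2 : delta ^+ 2 = -1.
  have : (delta ^+ 2) ^+ 2 == 1 by rewrite -exprM delta4.
  by rewrite !sqrf_eq1 (negbTE delta_neq1) (negbTE delta_neqN1) => /eqP.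
split; first by have := @linearized_addXq F 5 1 5 delta; rewrite expn1.
move=> y z y0 z0; rewrite expn0 !expr1 !(horner_twist hF delta2) => eqS.
exact/eqP/(twist_scattered hF delta2 y0 z0 eqS).
Qed.
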